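(* Let $A\in\mathbb{R}^{m\times n}$, $b\in\mathbb{R}^m$, and $c,c'\in\mathbb{R}^n$. Let $s'$ be an optimal dual solution to $\operatorname{LP}(c')$, i.e. $s'=c'-A^\top y'\ge\mathbb{0}$ for some $y'\in\mathbb{R}^m$ with $(y',s')$ optimal for the dual $\max\{\langle b,y\rangle: A^\top y+s=c',\ s\ge\mathbb{0}\}$. If $c\in\ker(A)$, $\|c\|_2=1$, and $\|c-c'\|_\infty<1/(\sqrt n(m+2)\kappa_A)$, then there exists an index $j\in[n]$ with \[s'_j>\frac{m+1}{\sqrt n(m+2)}.\]
   Context: $\operatorname{LP}(\tilde c)$ denotes $\min\{\langle\tilde c,x\rangle: Ax=b,\ x\ge\mathbb{0}\}$. An elementary vector of $\ker(A)$ is a nonzero $g\in\ker(A)$ with inclusion-minimal support among nonzero vectors of $\ker(A)$; the circuit imbalance is $\kappa_A=\max\{|g_i|/|g_j|: g \text{ elementary},\ i,j\in\mathrm{supp}(g)\}$ (so $\kappa_A\ge 1$). *)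

From HB Require Import structures.
From mathcomp Require Import all_boot all_order all_algebra.
From mathcomp Require Import reals.
Set Implicit Arguments. Unset Strict Implicit. Unset Printing Implicit Defensive.
Import Order.TTheory GRing.Theory Num.Theory.
Local Open Scope ring_scope.

Definition supp (R : realType) (n : nat) (g : 'cV[R]_n) : {set 'I_n} :=
  [set i | g i 0 != 0].

Definition elementary (R : realType) (m n : nat) (A : 'M[R]_(m, n))
  (g : 'cV[R]_n) : Prop :=
  [/\ g != 0, A *m g = 0 &
      forall h : 'cV[R]_n, h != 0 -> A *m h = 0 ->
        supp h \subset supp g -> supp h = supp g].

Definition circuit_imbalance (R : realType) (m n : nat) (A : 'M[R]_(m, n))
  (k : R) : Prop :=
  (forall g i j, elementary A g -> i \in supp g -> j \in supp g ->
      `|g i 0| / `|g j 0| <= k) /\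
  (exists g i j, [/\ elementary A g, i \in supp g, j \in supp g &
      `|g i 0| / `|g j 0| = k]).

Definition norm2 (R : realType) (n : nat) (v : 'cV[R]_n) : R :=
  Num.sqrt (\sum_i v i 0 ^+ 2).

Definition normInf (R : realType) (n : nat) (v : 'cV[R]_n) : R :=
  \big[Num.max/0]_i `|v i 0|.

Definition dotv (R : realType) (n : nat) (u v : 'cV[R]_n) : R :=
  \sum_i u i 0 * v i 0.

Definition dual_optimal_slack (R : realType) (m n : nat) (A : 'M[R]_(m, n))
  (b : 'cV[R]_m) (c' s' : 'cV[R]_n) : Prop :=
  exists y' : 'cV[R]_m,
    [/\ s' = c' - A^T *m y',
        (forall i, 0 <= s' i 0) &
        forall (y : 'cV[R]_m) (s : 'cV[R]_n),
          A^T *m y + s = c' -> (forall i, 0 <= s i 0) ->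
          dotv b y <= dotv b y'].

From HB Require Import structures.
From mathcomp Require Import all_boot all_order all_algebra.
From mathcomp Require Import reals.
From mathcomp Require Import ring lra.
Set Implicit Arguments. Unset Strict Implicit. Unset Printing Implicit Defensive.
Import Order.TTheory GRing.Theory Num.Theory.
Local Open Scope ring_scope.

(* Since c lies in ker A, it is orthogonal to A^T y', so <c, s'> = <c, c'> and
   1 = <c, c> = <c, s'> + <c, c - c'> <= |c|_1 (|s'|_inf + |c - c'|_inf)
     <= sqrt n (|s'|_inf + |c - c'|_inf).
   As kappa_A >= 1, the bound on |c - c'|_inf is below 1 / (sqrt n (m + 2)),
   which forces |s'|_inf > (m + 1) / (sqrt n (m + 2)). *)

Section Norms.
Variables (R : realType) (n : nat).
Implicit Types u v : 'cV[R]_n.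

Definition norm1 v : R := \sum_i `|v i 0|.

Lemma normInf_ge0 v : 0 <= normInf v.
Proof. exact: bigmax_ge_id. Qed.

Lemma ler_normInf v i : `|v i 0| <= normInf v.
Proof. by rewrite /normInf; apply: le_bigmax. Qed.

Lemma normInf_gt v (a : R) : 0 <= a -> a < normInf v -> exists i, a < `|v i 0|.
Proof.
move=> a_ge0 lt_a_v; case: (pickP (fun i => a < `|v i 0|)) => [i ? | none].
  by exists i.
suff : normInf v <= a by rewrite leNgt lt_a_v.
by apply: bigmax_le => // i _; rewrite leNgt none.
Qed.

Lemma dotvv v : dotv v v = norm2 v ^+ 2.
Proof.
rewrite /norm2 sqr_sqrtr; last by apply: sumr_ge0 => i _; exact: sqr_ge0.
by apply: eq_bigr => i _; rewrite expr2.
Qed.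

Lemma dotvDr u v w : dotv u (v + w) = dotv u v + dotv u w.
Proof. by rewrite /dotv -big_split; apply: eq_bigr => i _; rewrite mxE mulrDr. Qed.

Lemma ler_dotv_norm1_normInf u v : dotv u v <= norm1 u * normInf v.
Proof.
rewrite /dotv /norm1 mulr_suml; apply: ler_sum => i _.
by rewrite (le_trans (ler_norm _)) // normrM ler_wpM2l // ler_normInf.
Qed.

Lemma sqr_norm1_le v : norm1 v ^+ 2 <= n%:R * \sum_i v i 0 ^+ 2.
Proof.
rewrite -(@ler_pM2l _ 2) //.
have -> : 2 * (n%:R * \sum_i v i 0 ^+ 2) =
          \sum_i \sum_j (v i 0 ^+ 2 + v j 0 ^+ 2).
  rewrite [RHS](eq_bigr (fun i => n%:R * v i 0 ^+ 2 + \sum_j v j 0 ^+ 2)); last first.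
    by move=> i _; rewrite big_split /= sumr_const card_ord mulr_natl.
  by rewrite big_split /= sumr_const card_ord -mulr_sumr mulr_natl; ring.
rewrite expr2 /norm1 mulr_suml mulr_sumr; apply: ler_sum => i _.
rewrite mulr_sumr mulr_sumr; apply: ler_sum => j _.
rewrite -[v i 0 ^+ 2]real_normK ?num_real // -[v j 0 ^+ 2]real_normK ?num_real //.
have := sqr_ge0 (`|v i 0| - `|v j 0|); nra.
Qed.

Lemma norm1_le_sqrt_norm2 v : norm1 v <= Num.sqrt n%:R * norm2 v.
Proof.
have norm1_ge0 : 0 <= norm1 v by apply: sumr_ge0 => i _.
rewrite -(ger0_norm norm1_ge0) -sqrtr_sqr /norm2 -sqrtrM ?ler0n //.
rewrite ler_sqrt ?sqr_norm1_le // mulr_ge0 ?ler0n // sumr_ge0 // => i _.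
exact: sqr_ge0.
Qed.

End Norms.

Lemma dotv_trmx_ker (R : realType) (m n : nat) (A : 'M[R]_(m, n)) c y :
  A *m c = 0 -> dotv c (A^T *m y) = 0.
Proof.
move=> Ac; have <- : (c^T *m (A^T *m y)) 0 0 = 0.
  by rewrite mulmxA -trmx_mul Ac trmx0 mul0mx mxE.
by rewrite mxE; apply: eq_bigr => k _; rewrite !mxE.
Qed.

Lemma circuit_imbalance_ge1 (R : realType) (m n : nat) (A : 'M[R]_(m, n)) k :
  circuit_imbalance A k -> 1 <= k.
Proof.
case=> le_k [g [i [_ [elem_g gi _ _]]]].
have := le_k g i i elem_g gi gi.
by rewrite divff // normr_eq0; move: gi; rewrite inE.
Qed.

Lemma perturbed_lower_bound (R : realFieldType) (s K k M d : R) :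
  0 <= s -> 0 < K -> 1 <= k -> 0 <= d -> d < 1 / (s * K * k) ->
  1 <= s * (M + d) -> (K - 1) / (s * K) < M.
Proof.
move=> s_ge0 K_gt0 k_ge1 d_ge0 lt_d key.
have s_gt0 : 0 < s.
  by rewrite lt0r s_ge0 andbT; apply: contraTneq key => ->; rewrite mul0r ler10.
have k_gt0 : 0 < k := lt_le_trans ltr01 k_ge1.
move: lt_d; rewrite ltr_pdivlMr ?mulr_gt0 // => lt_d.
rewrite ltr_pdivrMr ?mulr_gt0 //.
have := ler_peMr (mulr_ge0 (mulr_ge0 s_ge0 d_ge0) (ltW K_gt0)) k_ge1.
have := ler_peMr (ltW K_gt0) key.
lra.
Qed.

Theorem lemma2p10 (R : realType) (m n : nat) (A : 'M[R]_(m, n))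
  (b : 'cV[R]_m) (c c' s' : 'cV[R]_n) (kappa : R) :
  circuit_imbalance A kappa ->
  dual_optimal_slack A b c' s' ->
  A *m c = 0 ->
  norm2 c = 1 ->
  normInf (c - c') < 1 / (Num.sqrt (n%:R) * (m + 2)%:R * kappa) ->
  exists j : 'I_n, s' j 0 > (m + 1)%:R / (Num.sqrt (n%:R) * (m + 2)%:R).
Proof.
move=> /circuit_imbalance_ge1 kappa_ge1 [y' [s'E s'_ge0 _]] Ac c_unit.
set s := Num.sqrt n%:R; set K := (m + 2)%:R; set d := normInf (c - c') => lt_d.
have key : 1 <= s * (normInf s' + d).
  rewrite -[X in X <= _](expr1n _ 2) -c_unit -dotvv.
  have -> : dotv c c = dotv c s' + dotv c (c - c').
    by rewrite s'E -mulmxN dotvDr dotv_trmx_ker // addr0 -dotvDr subrKC.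
  apply: le_trans
    (lerD (ler_dotv_norm1_normInf c s') (ler_dotv_norm1_normInf c (c - c'))) _.
  rewrite -mulrDr ler_wpM2r ?addr_ge0 ?normInf_ge0 //.
  by rewrite -[s]mulr1 -c_unit norm1_le_sqrt_norm2.
have bound : (m + 1)%:R / (s * K) < normInf s'.
  rewrite (_ : (m + 1)%:R = K - 1); last by rewrite /K !natrD; ring.
  apply: perturbed_lower_bound (sqrtr_ge0 _) _ kappa_ge1 (normInf_ge0 _) lt_d key.
  by rewrite ltr0n addn2.
have [|j lt_j] := normInf_gt _ bound.
  by rewrite divr_ge0 ?mulr_ge0 ?sqrtr_ge0.
by exists j; rewrite -(ger0_norm (s'_ge0 j)).
Qed.
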